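(* Let $a$ be a point of $AG(4,3)$ and let $D$ be a cap which is the union of five pairwise disjoint $a$-lines (so $|D|=10$ and $a\notin D$). Then $D$ is a demicap with anchor point $a$ if and only if for every point $b\notin D\cup\{a\}$, the set $D\cup\{b\}$ contains at most one line.
   Context: $AG(4,3)$ is the affine space $\mathbb{F}_3^4$; a line is a set of three distinct points $\{x,y,z\}$ with $x+y+z=0$. A cap is a set of points containing no line. A hyperplane is a $3$-dimensional affine subspace of $\mathbb{F}_3^4$; a set of points is co-hyperplanar if it lies in a common hyperplane. For a point $a$, an $a$-line is a pair of points $\{b,c\}$ such that $\{a,b,c\}$ is a line. A demicap with anchor point $a$ is a cap consisting of the $10$ points of five $a$-lines such that no four of these five $a$-lines are co-hyperplanar (i.e. the $8$ points of any four of them do not lie in a common hyperplane). *)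

(* AG(4,3) = F_3^4 modelled as row vectors 'rV['F_3]_4. *)
From HB Require Import structures.
From mathcomp Require Import all_boot all_order all_algebra.
Set Implicit Arguments. Unset Strict Implicit. Unset Printing Implicit Defensive.
Import GRing.Theory.
Local Open Scope ring_scope.

Definition point := 'rV['F_3]_4.

Definition is_line (l : {set point}) : bool :=
  [exists x : point, exists y : point, exists z : point,
    [&& x != y, y != z, x != z, x + y + z == 0 & l == [set x; y; z]]].

Definition cap (S : {set point}) : bool :=
  [forall l : {set point}, is_line l ==> ~~ (l \subset S)].

Definition lines_in (S : {set point}) : {set {set point}} :=
  [set l : {set point} | is_line l && (l \subset S)].

Definition aline (a : point) (p : {set point}) : bool :=
  [exists b : point, exists c : point,
    (p == [set b; c]) && is_line [set a; b; c] && (a != b) && (a != c) && (b != c)].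

Definition hyperplane (H : {set point}) : Prop :=
  exists (p : point) (U : 'M['F_3]_4),
    \rank U = 3%N /\ H = [set x : point | (x - p <= U)%MS].

Definition cohyperplanar (S : {set point}) : Prop :=
  exists H : {set point}, hyperplane H /\ S \subset H.

Definition demicap (a : point) (D : {set point}) : Prop :=
  cap D /\
  exists L : {set {set point}},
    #|L| = 5%N /\ {in L, forall l, aline a l} /\ trivIset L /\ cover L = D /\
        #|D| = 10%N /\
        forall L' : {set {set point}}, L' \subset L -> #|L'| = 4%N ->
          ~ cohyperplanar (cover L').

From mathcomp Require Import all_boot all_order all_algebra.
Set Implicit Arguments. Unset Strict Implicit. Unset Printing Implicit Defensive.
Import GRing.Theory.
Local Open Scope ring_scope.

(* We measure from the anchor: with third x y = - x - y (the third point of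
   the line through x and y), the a-line of x is {x, third a x}, whose
   vectors x - a are opposite; as 3 = 0 in F_3, zero sums of three points do
   not depend on the base point, so the geometry becomes linear algebra.
   (=>) Two lines {b,x,y}, {b,z,w} meet four distinct a-lines (cap property),
   and w - a lies in the span of x - a, y - a, z - a, so the four a-lines lie
   in a hyperplane through a.  (<=) A hyperplane containing four a-lines
   contains a, so vectors x_i - a of representatives are dependent; absorbing
   signs into the representatives this is a zero sum of 1 to 4 such vectors,
   excluded by disjointness (1, 2 terms), the cap property (3 terms) and the
   hypothesis, via two lines through b = third x_0 x_1 (4 terms). *)

Section Char3.
Variable V : lmodType 'F_3.
Implicit Types a b p v x y z : V.

Lemma mulrn3 v : v *+ 3 = 0.
Proof. by rewrite -scaler_nat (_ : 3%:R = 0 :> 'F_3) ?scale0r //; apply/eqP. Qed.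

Lemma mulrn2 v : v *+ 2 = - v.
Proof. by apply/eqP; rewrite -addr_eq0 -mulrSr mulrn3. Qed.

Definition third x y : V := - x - y.

Lemma thirdC x y : third x y = third y x.
Proof. by rewrite /third addrC. Qed.

Lemma thirdK x y : third x (third x y) = y.
Proof. by rewrite /third opprD !opprK addKr. Qed.

Lemma third_injl y : injective (third^~ y).
Proof. by move=> x1 x2; rewrite /third => /addIr/oppr_inj. Qed.

Lemma sum_third x y : x + y + third x y = 0.
Proof. by rewrite /third -opprD addrN. Qed.

Lemma sum0_third x y z : x + y + z = 0 -> z = third x y.
Proof. by move/eqP; rewrite addrC addr_eq0 opprD => /eqP. Qed.

Lemma third_fix x y : (third x y == y) = (x == y).
Proof. by rewrite /third subr_eq -mulr2n mulrn2 eqr_opp. Qed.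

Lemma sum_shift p x y z : (x - p) + (y - p) + (z - p) = x + y + z.
Proof.
by rewrite [x - p + _]addrACA -opprD addrACA -opprD -mulr2n -mulrSr mulrn3 subr0.
Qed.

Lemma third_sum_shift p x y : third x y - p = - ((x - p) + (y - p)).
Proof.
rewrite opprD -/(third (x - p) (y - p)); apply: sum0_third.
by rewrite sum_shift sum_third.
Qed.

Lemma third_shift a x : third a x - a = - (x - a).
Proof. by rewrite third_sum_shift subrr add0r. Qed.

(* The identity behind the forward direction: if two lines through b meet
   the same a-line in x and third a x, their other points close a line. *)
Lemma third_third_sum a b x : x + third a (third b x) + third b (third a x) = 0.
Proof.
rewrite -(sum_shift x) !third_sum_shift subrr !addr0 add0r !opprB.
by rewrite subrKA subrr.
Qed.

End Char3.

Lemma F3_cases (k : 'F_3) : [\/ k = 0, k = 1 | k = -1].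
Proof.
by case: k => [[|[|[|//]]] ?]; [apply: Or31 | apply: Or32 | apply: Or33]; apply/eqP.
Qed.

Lemma third_sub n (U : 'M['F_3]_n) (p x y : 'rV['F_3]_n) :
  (x - p <= U)%MS -> (y - p <= U)%MS -> (third x y - p <= U)%MS.
Proof. by move=> xU yU; rewrite third_sum_shift eqmx_opp addmx_sub. Qed.

Lemma sub_shift n (U : 'M['F_3]_n) (p a y : 'rV['F_3]_n) :
  (y - p <= U)%MS -> (a - p <= U)%MS -> (y - a <= U)%MS.
Proof. by move=> yU aU; rewrite -(subrKA p) addmx_sub // -opprB eqmx_opp. Qed.

(* A proper subspace lies in a subspace of codimension one: the kernel of
   a nonzero linear form vanishing on it (a column of its cokernel). *)
Lemma subspace_extend (F : fieldType) m n (M : 'M[F]_(m, n)) :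
  (\rank M < n)%N -> exists U : 'M[F]_n, \rank U = n.-1 /\ (M <= U)%MS.
Proof.
move=> rM; set K := cokermx M.
have rK : (0 < \rank K)%N by rewrite mxrank_coker subn_gt0.
have [j Kj] : exists j, col j K != 0.
  apply/existsP; apply: contraTT rK; rewrite negb_exists => /forallP K0.
  suff -> : K = 0 by rewrite mxrank0.
  by apply/matrixP => i j; have /eqP/matrixP/(_ i 0) := negbNE (K0 j); rewrite !mxE.
exists (kermx (col j K)); split.
  have rKj : \rank (col j K) = 1%N.
    by apply/eqP; rewrite eqn_leq rank_leq_col lt0n mxrank_eq0.
  by rewrite mxrank_ker rKj subn1.
by apply/sub_kermxP; rewrite colE mulmxA -colE mulmx_coker col0.
Qed.

Lemma sum_set3 (x y z : point) : x != y -> y != z -> x != z ->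
  \sum_(t in [set x; y; z]) t = x + y + z.
Proof.
move=> xy yz xz.
have -> : [set x; y; z] = x |: (y |: [set z]) by apply/setP => t; rewrite !inE orbA.
by rewrite big_setU1 /= ?big_setU1 ?big_set1 ?addrA // !inE ?negb_or ?xy ?xz.
Qed.

Lemma is_line_sum (x y z : point) : x != y -> y != z -> x != z ->
  is_line [set x; y; z] -> x + y + z = 0.
Proof.
move=> xy yz xz /existsP[p /existsP[q /existsP[r /and5P[pq qr pr /eqP s0 /eqP E]]]].
by rewrite -sum_set3 // E sum_set3.
Qed.

Lemma is_lineP (x y z : point) : x != y -> x + y + z = 0 -> is_line [set x; y; z].
Proof.
move=> xy s0; have zE := sum0_third s0.
have yz : y != z by rewrite zE eq_sym third_fix.
have xz : x != z by rewrite zE eq_sym thirdC third_fix eq_sym.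
apply/existsP; exists x; apply/existsP; exists y; apply/existsP; exists z.
by rewrite xy yz xz s0 !eqxx.
Qed.

Definition line_of (b x : point) : {set point} := [set b; x; third b x].

Lemma line_ofC b x : line_of b (third b x) = line_of b x.
Proof. by apply/setP => t; rewrite !inE thirdK orbAC. Qed.

Lemma line_of_mem b x z : z \in line_of b x -> z != b -> line_of b z = line_of b x.
Proof.
by rewrite !inE => /orP[/orP[->//|/eqP->]|/eqP->] // _; rewrite line_ofC.
Qed.

Lemma line_through l t : is_line l -> t \in l -> exists2 x, x != t & l = line_of t x.
Proof.
move=> /existsP[p /existsP[q /existsP[r /and5P[pq qr pr /eqP s0 /eqP ->]]]].
have rE := sum0_third s0.
rewrite !inE => /orP[/orP[]|]/eqP->.
- by exists q; rewrite 1?eq_sym // /line_of -rE.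
- exists p => //.
  by apply/setP => u; rewrite !inE -(thirdC p q) -rE [(u == p) || _]orbC.
- have qE : q = third r p by apply: sum0_third; rewrite [r + p]addrC addrAC.
  exists p => //.
  by apply/setP => u; rewrite !inE -qE orbC orbA.
Qed.

Lemma line_of_in_lines (D : {set point}) b x :
  x \in D -> third b x \in D -> b \notin D -> line_of b x \in lines_in (b |: D).
Proof.
move=> xD yD bD; rewrite inE is_lineP ?sum_third //=; last first.
  by apply: contraNneq bD => ->.
by apply/subsetP => t; rewrite !inE => /orP[/orP[]|]/eqP->; rewrite ?eqxx ?xD ?yD ?orbT.
Qed.

Lemma cap_sum0 (D : {set point}) p q r : cap D ->
  p \in D -> q \in D -> r \in D -> p + q + r = 0 -> p = q.
Proof.
move=> capD pD qD rD s0; apply/eqP; apply: contraT => pq.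
have lineD : [set p; q; r] \subset D.
  by apply/subsetP => t; rewrite !inE => /orP[/orP[]|]/eqP->.
by move/forallP: capD => /(_ [set p; q; r]); rewrite is_lineP // lineD.
Qed.

Lemma cap_line_in_cone (D : {set point}) b l : cap D -> b \notin D ->
  l \in lines_in (b |: D) -> exists x, [/\ x \in D, third b x \in D & l = line_of b x].
Proof.
move=> capD bD; rewrite inE => /andP[lineL lD].
have inD t : t \in l -> t != b -> t \in D.
  by move=> tl tb; have := subsetP lD t tl; rewrite !inE (negbTE tb).
have bl : b \in l.
  apply: contraT => bl; have lD' : l \subset D.
    by apply/subsetP => t tl; apply: inD => //; apply: contraNneq bl => <-.
  by move/forallP: capD => /(_ l); rewrite lineL lD'.
have [x xb lE] := line_through lineL bl.
exists x; split => //; apply: inD; rewrite ?lE ?inE ?eqxx ?orbT //.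
by rewrite thirdC third_fix.
Qed.

Lemma aline_third a B x : aline a B -> x \in B -> B = [set x; third a x] /\ x != a.
Proof.
move=> /existsP[b /existsP[c /andP[/andP[/andP[/andP[/eqP -> lineabc] ab] ac] bc]]].
have cE : c = third a b := sum0_third (is_line_sum ab bc ac lineabc).
rewrite !inE => /orP[]/eqP->; first by rewrite -cE eq_sym.
split; last by rewrite eq_sym.
by apply/setP => t; rewrite !inE cE thirdK orbC.
Qed.

Lemma aline_card a B : aline a B -> #|B| = 2%N.
Proof.
move=> /existsP[b /existsP[c /andP[/andP[/andP[/andP[/eqP -> _] _] _] bc]]].
by rewrite cards2 bc.
Qed.

Lemma mem_cover (T : finType) (P : {set {set T}}) B x :
  B \in P -> x \in B -> x \in cover P.
Proof. by move=> BP xB; apply/bigcupP; exists B. Qed.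

(* A set L of pairwise disjoint a-lines with union D; the a-line of x \in D
   is its block pblock L x. *)
Section Alines.
Variables (a : point) (L : {set {set point}}).
Hypotheses (alinesL : {in L, forall l, aline a l}) (trivL : trivIset L).
Local Notation D := (cover L).

Lemma card_cover_alines : #|L| = 5%N -> #|D| = 10%N.
Proof.
move=> L5; have [_] := leq_card_cover L; rewrite trivL => /eqP ->.
by rewrite (eq_bigr (fun _ => 2%N)) ?sum_nat_const ?L5 // => B /alinesL/aline_card.
Qed.

Lemma pblock_cover x : x \in D ->
  [/\ pblock L x \in L, pblock L x = [set x; third a x] & x != a].
Proof.
move=> xD; have BL := pblock_mem xD.
by have [] := aline_third (alinesL BL) (x := x); rewrite ?mem_pblock.
Qed.

Lemma third_cover x : x \in D -> third a x \in D.
Proof.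
move=> xD; have [BL BE _] := pblock_cover xD.
by apply: (mem_cover BL); rewrite BE !inE eqxx orbT.
Qed.

Lemma pblock_third x : x \in D -> pblock L (third a x) = pblock L x.
Proof.
move=> xD; have [BL BE _] := pblock_cover xD.
by apply: def_pblock; rewrite // BE !inE eqxx orbT.
Qed.

Lemma same_pblock x y : x \in D -> y \in D ->
  pblock L x = pblock L y -> y = x \/ y = third a x.
Proof.
move=> xD yD Exy; have [_ BE _] := pblock_cover xD.
by have := mem_pblock L y; rewrite yD -Exy BE !inE => /orP[]/eqP; [left | right].
Qed.

Lemma pblock_neq x y : y \in D -> pblock L x != pblock L y -> x != y /\ x != third a y.
Proof.
by move=> yD Bxy; split; apply: contraNneq Bxy => ->; rewrite ?pblock_third.
Qed.

(* Signs are absorbed by the choice of a representative: for k <> 0,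
   k *: (x - a) is the vector of x or of its partner third a x. *)
Definition signed (k : 'F_3) (x : point) : point := if k == 1 then x else third a x.

Lemma scale_shift k x : k != 0 -> k *: (x - a) = signed k x - a.
Proof.
rewrite /signed; case: (F3_cases k) => -> //= _; first by rewrite ?eqxx scale1r.
by rewrite scaleN1r third_shift.
Qed.

Lemma signed_cover k x : x \in D -> signed k x \in D.
Proof. by rewrite /signed; case: ifP => // _; apply: third_cover. Qed.

Lemma pblock_signed k x : x \in D -> pblock L (signed k x) = pblock L x.
Proof. by rewrite /signed; case: ifP => // _; apply: pblock_third. Qed.

(* Zero sums of vectors x_i - a with the x_i in distinct a-lines of D:
   impossible with one or two terms by disjointness, ... *)
Lemma shift_neq0 x : x \in D -> x - a != 0.
Proof. by move=> xD; rewrite subr_eq0; have [] := pblock_cover xD. Qed.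

Lemma shift_sum2 x y : y \in D -> pblock L x != pblock L y -> (x - a) + (y - a) != 0.
Proof.
move=> yD Bxy; have [_ xy'] := pblock_neq yD Bxy.
by apply: contra xy'; rewrite addr_eq0 -third_shift (inj_eq (addIr _)).
Qed.

Hypothesis capD : cap D.

(* ... with three terms by the cap property, ... *)
Lemma shift_sum3 x y z : x \in D -> y \in D -> z \in D ->
  pblock L x != pblock L y -> (x - a) + (y - a) + (z - a) != 0.
Proof.
move=> xD yD zD Bxy; rewrite sum_shift; apply: contra Bxy => /eqP s0.
by rewrite (cap_sum0 capD xD yD zD s0).
Qed.



Section Backward.

Hypothesis one_line :
  forall b : point, b \notin D -> b != a -> (#|lines_in (b |: D)| <= 1)%N.

(* ... and with four terms, under the one-line hypothesis, because
   b = third q0 q1 would lie on the two lines {q0, q1, b} and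
   {b, third a q2, third a q3}. *)
Lemma shift_sum4 q0 q1 q2 q3 :
  q0 \in D -> q1 \in D -> q2 \in D -> q3 \in D ->
  pblock L q0 != pblock L q1 -> pblock L q0 != pblock L q2 ->
  pblock L q0 != pblock L q3 -> pblock L q2 != pblock L q3 ->
  (q0 - a) + (q1 - a) + (q2 - a) + (q3 - a) != 0.
Proof.
move=> q0D q1D q2D q3D B01 B02 B03 B23; apply/negP => /eqP s0.
set b := third q0 q1.
have bD : b \notin D.
  by apply: contra B01 => bD; rewrite (cap_sum0 capD q0D q1D bD (sum_third q0 q1)).
have ba : b != a.
  apply: contra B01 => /eqP ba.
  have q1E : q1 = third a q0.
    by rewrite thirdC; apply: sum0_third; rewrite addrAC -ba sum_third.
  by rewrite q1E pblock_third.
have l1E : third b q0 = q1 by rewrite thirdC thirdK.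
have l2E : third b (third a q2) = third a q3.
  apply/esym/sum0_third; rewrite -(sum_shift a) !third_shift /b third_sum_shift.
  by rewrite -!opprD s0 oppr0.
have := one_line bD ba; rewrite leqNgt => /negP; apply; apply/card_gt1P.
exists (line_of b q0), (line_of b (third a q2)); split.
- by apply: line_of_in_lines; rewrite ?l1E.
- by apply: line_of_in_lines; rewrite ?l2E ?third_cover.
- apply: contraTneq (_ : q0 \in line_of b q0) => [->|]; last by rewrite !inE eqxx orbT.
  have [_ q02] := pblock_neq q2D B02; have [_ q03] := pblock_neq q3D B03.
  rewrite !inE l2E (negbTE q02) (negbTE q03) !orbF.
  by apply: contraNneq bD => <-.
Qed.

Lemma shift_sum_seq (s : seq point) : all (mem D) s -> uniq (map (pblock L) s) ->
  (0 < size s <= 4)%N -> \sum_(x <- s) (x - a) != 0.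
Proof.
case: s => [|q0 [|q1 [|q2 [|q3 [|]]]]] //=; rewrite ?inE ?negb_or ?andbT => sD uB _;
  rewrite !big_cons big_nil addr0.
- exact: shift_neq0.
- by case/andP: sD => _ q1D; apply: shift_sum2 q1D uB.
- case/and3P: sD => q0D q1D q2D; case/andP: uB => /andP[B01 _] _.
  by rewrite addrA shift_sum3.
- case/and4P: sD => q0D q1D q2D q3D.
  case/and3P: uB => /and3P[B01 B02 B03] _ B23.
  by rewrite 2!addrA shift_sum4.
Qed.

Lemma shifted_reps_free (I : finType) (f : I -> point) :
  (#|I| <= 4)%N -> injective (fun i => pblock L (f i)) -> (forall i, f i \in D) ->
  forall k : I -> 'F_3, \sum_i k i *: (f i - a) = 0 -> forall i, k i = 0.
Proof.
move=> I4 injB fD k sum0 i; apply/eqP; apply: contraT => ki.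
set S := [pred j | k j != 0].
have sumS : \sum_(j in S) (signed (k j) (f j) - a) = 0.
  rewrite -[RHS]sum0 [RHS](bigID S) [X in _ = _ + X]big1 ?addr0; last first.
    by move=> j /negbNE/eqP->; rewrite scale0r.
  by apply: eq_bigr => j kj; rewrite scale_shift.
have := shift_sum_seq (s := [seq signed (k j) (f j) | j in S]).
rewrite big_image sumS eqxx; apply.
- by apply/allP => _ /mapP[j _ ->]; apply: signed_cover.
- rewrite -map_comp (@eq_map _ _ _ (fun j => pblock L (f j))) ?map_inj_uniq ?enum_uniq //.
  by move=> j /=; apply: pblock_signed.
- rewrite size_map -cardE (leq_trans (max_card _) I4) andbT.
  by apply/card_gt0P; exists i.
Qed.

(* Backward direction: a hyperplane containing four a-lines contains a,
   so four independent vectors would lie in a 3-dimensional subspace. *)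
Lemma no_four_cohyperplanar (L' : {set {set point}}) :
  L' \subset L -> #|L'| = 4%N -> ~ cohyperplanar (cover L').
Proof.
move=> subL L'4 [_ [[p [U [rU ->]]] coverH]].
have L'L B : B \in L' -> B \in L := subsetP subL B.
pose rep (B : {set point}) := odflt a [pick x in B].
have repP B : B \in L -> rep B \in B.
  move=> BL; rewrite /rep; case: pickP => //= B0.
  by have := aline_card (alinesL BL); rewrite (eq_card0 B0).
pose f (i : 'I_#|L'|) := rep (enum_val i).
have fB (i : 'I_#|L'|) : f i \in enum_val i := repP _ (L'L _ (enum_valP i)).
have inH x (i : 'I_#|L'|) : x \in enum_val i -> (x - p <= U)%MS.
  by move=> xB; have := subsetP coverH x (mem_cover (enum_valP i) xB); rewrite inE.
have fU (i : 'I_#|L'|) : (f i - a <= U)%MS.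
  have [BE _] := aline_third (alinesL (L'L _ (enum_valP i))) (fB i).
  have partnerH : (third a (f i) - p <= U)%MS.
    by apply: (inH _ i); rewrite BE !inE eqxx orbT.
  have := third_sub (inH _ _ (fB i)) partnerH; rewrite [third a _]thirdC thirdK.
  exact: sub_shift (inH _ _ (fB i)).
pose M := \matrix_(i < #|L'|) (f i - a).
have MU : (M <= U)%MS by apply/row_subP => i; rewrite rowK fU.
have freeM : row_free M.
  apply/inj_row_free => v vM0; apply/rowP => i; rewrite mxE.
  apply: (shifted_reps_free (f := f)) => [||j|].
  - by rewrite card_ord L'4.
  - move=> i1 i2 /=.
    by rewrite !(def_pblock trivL (L'L _ (enum_valP _)) (fB _)) => /enum_val_inj.
  - exact: mem_cover (L'L _ (enum_valP j)) (fB j).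
  - by rewrite -[RHS]vM0 mulmx_sum_row; apply: eq_bigr => j _; rewrite rowK.
by have := mxrankS MU; rewrite rU (eqP freeM) L'4.
Qed.

End Backward.

Section Forward.

Lemma line_pblocks b x : b \notin D -> b != a -> x \in D -> third b x \in D ->
  pblock L x != pblock L (third b x).
Proof.
move=> bD ba xD yD; apply/eqP => /(same_pblock xD yD) [/eqP|/third_injl/eqP].
  by rewrite third_fix => /eqP bx; rewrite bx xD in bD.
by rewrite (negbTE ba).
Qed.

(* Two distinct lines through b outside D ∪ {a} meet disjoint pairs of
   a-lines: sharing an a-line would create a line inside the cap. *)
Lemma cross_pblocks b x z : b \notin D -> b != a -> x \in D -> z \in D ->
  third b x \in D -> third b z \in D -> z \notin line_of b x -> pblock L x != pblock L z.
Proof.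
move=> bD ba xD zD yD wD zl; apply/eqP => Bxz.
have [zx | zE] := same_pblock xD zD Bxz; first by rewrite zx !inE eqxx orbT in zl.
have s0 := third_third_sum a b x; rewrite -zE in s0.
have xE := cap_sum0 capD xD (third_cover yD) wD s0.
by move: (line_pblocks bD ba xD yD); rewrite {1}xE pblock_third ?eqxx.
Qed.

Lemma cover_cohyperplanar (L' : {set {set point}}) (U : 'M['F_3]_4) :
  \rank U = 3%N -> L' \subset L ->
  (forall B, B \in L' -> exists2 x, x \in B & (x - a <= U)%MS) ->
  cohyperplanar (cover L').
Proof.
move=> rU subL repU; exists [set t | (t - a <= U)%MS]; split; first by exists a, U.
apply/subsetP => t /bigcupP[B BL' tB]; rewrite inE.
have [x xB xU] := repU B BL'.
have [BE _] := aline_third (alinesL (subsetP subL B BL')) xB.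
by move: tB; rewrite BE !inE => /orP[]/eqP->; rewrite ?third_shift ?eqmx_opp.
Qed.

Definition quad_blocks (x y z w : point) : {set {set point}} :=
  pblock L x |: (pblock L y |: (pblock L z |: [set pblock L w])).

(* The four a-lines met by two lines {b, x, y} and {b, z, w} lie in a
   hyperplane through a: w - a is a combination of x - a, y - a, z - a. *)
Lemma two_lines_cohyperplanar b x z : x \in D -> third b x \in D ->
  z \in D -> third b z \in D ->
  cohyperplanar (cover (quad_blocks x (third b x) z (third b z))).
Proof.
set y := third b x; set w := third b z => xD yD zD wD.
have subL : quad_blocks x y z w \subset L.
  by apply/subsetP => B; rewrite !inE => /or4P[]/eqP->; apply: pblock_mem.
pose M := col_mx (x - a) (col_mx (y - a) (z - a)).
have [U [rU]] := subspace_extend (leq_ltn_trans (rank_leq_row M) (isT : 3 < 4)%N).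
rewrite !col_mx_sub => /and3P[xU yU zU].
have bU : (b - a <= U)%MS.
  by have := third_sub xU yU; rewrite /y [third b x]thirdC thirdK.
have wU : (w - a <= U)%MS := third_sub bU zU.
apply: (cover_cohyperplanar rU subL) => B; rewrite !inE => /or4P[]/eqP->.
- by exists x; rewrite ?mem_pblock.
- by exists y; rewrite ?mem_pblock.
- by exists z; rewrite ?mem_pblock.
- by exists w; rewrite ?mem_pblock.
Qed.

Hypothesis nonhyp : forall L' : {set {set point}},
  L' \subset L -> #|L'| = 4%N -> ~ cohyperplanar (cover L').

(* Forward direction: two lines through b would meet four distinct a-lines
   lying in a hyperplane. *)
Lemma at_most_one_line b : b \notin D -> b != a -> (#|lines_in (b |: D)| <= 1)%N.
Proof.
move=> bD ba; rewrite leqNgt; apply/negP => /card_gt1P [l1 [l2 [l1in l2in l12]]].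
have [x [xD yD l1E]] := cap_line_in_cone capD bD l1in.
have [z [zD wD l2E]] := cap_line_in_cone capD bD l2in.
have notin_l1 t : t \in D -> line_of b t = l2 -> t \notin line_of b x.
  move=> tD tl2; apply: contra l12 => tl1; rewrite l1E -tl2 (line_of_mem tl1) //.
  by apply: contraNneq bD => <-.
have zl1 := notin_l1 z zD (esym l2E).
have wl1 : third b z \notin line_of b x by apply: notin_l1; rewrite // line_ofC.
set y := third b x in yD wl1 zl1; set w := third b z in wD wl1.
have yK : third b y = x by rewrite thirdK.
have wK : third b w = z by rewrite thirdK.
have Bxy := line_pblocks bD ba xD yD.
have Bzw := line_pblocks bD ba zD wD.
have Bxz := cross_pblocks bD ba xD zD yD wD zl1.
have Bxw : pblock L x != pblock L w by apply: (cross_pblocks bD ba); rewrite ?wK.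
have Byz : pblock L y != pblock L z by apply: (cross_pblocks bD ba); rewrite ?yK ?line_ofC.
have Byw : pblock L y != pblock L w by apply: (cross_pblocks bD ba); rewrite ?yK ?wK ?line_ofC.
apply: (nonhyp _ _ (two_lines_cohyperplanar xD yD zD wD)).
  by apply/subsetP => B; rewrite !inE => /or4P[]/eqP->; apply: pblock_mem.
rewrite /quad_blocks !cardsU1 cards1 !inE (negbTE Bxy) (negbTE Bxz) (negbTE Bxw).
by rewrite (negbTE Byz) (negbTE Byw) (negbTE Bzw).
Qed.

End Forward.

End Alines.

Theorem lemma3p4 (a : point) (L : {set {set point}}) :
  #|L| = 5%N -> {in L, forall l, aline a l} -> trivIset L -> cap (cover L) ->
  (demicap a (cover L) <->
   forall b : point, b \notin cover L -> b != a ->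
     (#|lines_in (b |: cover L)| <= 1)%N).
Proof.
move=> L5 alinesL trivL capD; split.
- move=> [_ [L0 [_ [alinesL0 [trivL0 [coverE [_ nonhyp]]]]]]] b.
  rewrite -coverE; apply: (at_most_one_line alinesL0 trivL0 _ nonhyp).
  by rewrite coverE.
- move=> one_line; split=> //; exists L; do !split=> //.
    exact: card_cover_alines alinesL trivL L5.
  exact: no_four_cohyperplanar alinesL trivL capD one_line.
Qed.
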